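(* Let $(\Omega,\mathcal A)$ be a measurable space, let $A$ be a uniform algebra on a compact metric space $K$ with maximal ideal space $M$, and let $f:\Omega\times K\to\mathbb C$ satisfy $f(\omega,\cdot)\in A$ for all $\omega$ and $f(\cdot,z)$ measurable for all $z\in K$. Then the Gelfand transform $\widehat f:\Omega\times M\to\mathbb C$, $\widehat f(\omega,\phi)=\phi(f(\omega,\cdot))$, is a random continuous function on $M$, i.e. $\widehat f(\cdot,\phi)$ is measurable for each $\phi\in M$ and $\widehat f(\omega,\cdot)$ is continuous on $M$ for each $\omega$.
   Context: A uniform algebra on $K$ is a closed subalgebra of $C(K)$ with the sup norm containing the constants and separating points; $M$ is the set of nonzero multiplicative linear functionals on $A$ with the Gelfand (weak-* ) topology. *)

From HB Require Import structures.
From mathcomp Require Import all_boot all_algebra.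
From mathcomp Require Import all_classical all_reals all_analysis.
From mathcomp Require Import complex.
Import GRing.Theory Num.Theory numFieldTopology.Exports numFieldNormedType.Exports.

Set Implicit Arguments.
Unset Strict Implicit.
Unset Printing Implicit Defensive.

Local Open Scope classical_set_scope.
Local Open Scope ring_scope.
Local Open Scope complex_scope.

Definition Cx (R : rcfType) : numClosedFieldType := R[i].

Definition C_measurable d (T : measurableType d) (R : realType) (g : T -> Cx R) :=
  forall B : set (Cx R), <<s open >> B -> measurable (g @^-1` B).

Record uniform_algebra (R : realType) (K : topologicalType)
    (A : set (K -> Cx R)) : Prop := UniformAlgebra {
  ua_cont : forall a, A a -> continuous a;
  ua_add : forall a b, A a -> A b -> A (fun x => a x + b x);
  ua_scale : forall (c : Cx R) a, A a -> A (fun x => c * a x);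
  ua_mul : forall a b, A a -> A b -> A (fun x => a x * b x);
  ua_const : forall c : Cx R, A (fun _ => c);
  ua_sep : forall x y : K, x <> y -> exists2 a, A a & a x <> a y;
  ua_closed : forall g : K -> Cx R, continuous g ->
    (forall e : R, 0 < e -> exists2 a, A a & forall x, `|g x - a x| <= e%:C) ->
    A g
}.

(* Functionals are
   represented as maps on all of K -> C, normalized to vanish outside A, so that
   they are in bijection with the functionals on A. *)
Definition character (R : realType) (K : topologicalType) (A : set (K -> Cx R))
    (phi : (K -> Cx R) -> Cx R) : Prop :=
  [/\ (forall a b, A a -> A b -> phi (fun x => a x + b x) = phi a + phi b),
      (forall (c : Cx R) a, A a -> phi (fun x => c * a x) = c * phi a),
      (forall a b, A a -> A b -> phi (fun x => a x * b x) = phi a * phi b),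
      (exists2 a, A a & phi a <> 0) &
      (forall a, ~ A a -> phi a = 0)].

Definition characters (R : realType) (K : topologicalType) (A : set (K -> Cx R)) :=
  {phi : (K -> Cx R) -> Cx R | character A phi}.

HB.instance Definition _ (R : realType) (K : topologicalType)
  (A : set (K -> Cx R)) := gen_eqMixin (characters A).
HB.instance Definition _ (R : realType) (K : topologicalType)
  (A : set (K -> Cx R)) := gen_choiceMixin (characters A).

(* The maximal ideal space M of A with the Gelfand (weak-* ) topology: the
   initial topology of the inclusion of M into the space of functionals with
   the topology of pointwise convergence (coordinates outside A are constantly
   0, hence irrelevant). *)
Notation gelfand_space A :=
  (initial_topology
    (fun m : characters A => (proj1_sig m : {ptws (_ -> _) -> _}))).

Definition gelfand_transform (R : realType) (K : topologicalType)
    (A : set (K -> Cx R)) (Omega : Type) (f : Omega -> K -> Cx R)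
    (w : Omega) (phi : gelfand_space A) : Cx R :=
  proj1_sig phi (f w).
Arguments gelfand_transform {R K} A {Omega} f w phi.

(* Continuity in [phi] is built into the Gelfand topology. For measurability,
   the key fact is that a character is bounded by the sup norm: if
   [|phi a| > sup |a|], then [t = a / phi a] has sup norm [< 1], so [1 - t] is
   invertible in the uniformly closed algebra [A] (Neumann series) while
   [phi (1 - t) = 0]. As [K] is a compact metric space, [A] is separable for the
   sup norm, and the sup-norm balls [{w | sup_x |f w x - c x| <= r}] are
   measurable because the supremum can be taken over a countable dense subset
   of [K]. Hence [{w | phi (f w) \in U}] is a countable union of such balls. *)

From HB Require Import structures.
From mathcomp Require Import all_boot all_order all_algebra.
From mathcomp Require Import all_classical all_reals all_analysis.
From mathcomp Require Import complex.
From mathcomp Require Import ring lra.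
Import Order.TTheory GRing.Theory Num.Theory numFieldTopology.Exports numFieldNormedType.Exports.
Import Normc.

Set Implicit Arguments.
Unset Strict Implicit.
Unset Printing Implicit Defensive.

Local Open Scope classical_set_scope.
Local Open Scope ring_scope.
Local Open Scope complex_scope.

(* [normc z : R] is the modulus of [z]; estimates are stated with it rather
   than with [`|z| : Cx R] so that they live in the real field, where [lra]
   applies. *)
Section complex_modulus.
Variable R : realType.
Implicit Types x y z : Cx R.

Lemma normr_normc z : `|z| = (normc z)%:C.
Proof. by case: z. Qed.

Lemma normc_ge0 z : 0 <= normc z.
Proof. by case: z => a b; exact: sqrtr_ge0. Qed.

Lemma normc_distC x y : normc (x - y) = normc (y - x).
Proof. by rewrite -normcN opprB. Qed.

Lemma le_normc_distD x y z : normc (x - z) <= normc (x - y) + normc (y - z).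
Proof. by rewrite -[x - z](subrKA y) le_normcD. Qed.

Lemma normcX z n : normc (z ^+ n) = normc z ^+ n.
Proof. by elim: n => [|n IH]; rewrite ?normc1 // !exprS normcM IH. Qed.

Lemma normc_eq0 z : (normc z == 0) = (z == 0).
Proof. by apply/eqP/eqP => [/eq0_normc|->]; rewrite ?normc0. Qed.

Lemma ball_normc x y (e : R) : ball x e%:C y <-> normc (x - y) < e.
Proof. by rewrite -ball_normE /ball_ /= normr_normc ltcR. Qed.

End complex_modulus.

Lemma onem_neq0 (R : realType) (t : Cx R) : normc t < 1 -> 1 - t != 0.
Proof.
move=> t1; rewrite -normc_eq0 gt_eqF //.
by have := le_normcD (1 - t) t; rewrite subrK normc1; lra.
Qed.

Lemma normc_geometric_tail (R : realType) (t : Cx R) (rho : R) (N : nat) :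
  normc t <= rho -> rho < 1 ->
  normc ((1 - t)^-1 - \sum_(k < N) t ^+ k) <= rho ^+ N / (1 - rho).
Proof.
move=> t_rho rho1.
have low : 1 - rho <= normc (1 - t).
  by have := le_normcD (1 - t) t; rewrite subrK normc1; lra.
have t1 : 1 - t != 0 by apply: onem_neq0; lra.
have -> : (1 - t)^-1 - \sum_(k < N) t ^+ k = t ^+ N / (1 - t).
  apply: (mulIf t1); rewrite mulrBl mulVf // divfK //.
  have -> : (\sum_(k < N) t ^+ k) * (1 - t) = - ((t - 1) * \sum_(k < N) t ^+ k) by ring.
  by rewrite -subrX1; ring.
have rho0 : 0 <= rho := le_trans (normc_ge0 t) t_rho.
rewrite normcM normcV normcX; apply: ler_pM.
- exact/exprn_ge0/normc_ge0.
- by rewrite invr_ge0 normc_ge0.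
- by apply: lerXn2r; rewrite ?nnegrE ?normc_ge0.
- by rewrite lef_pV2 ?posrE ?subr_gt0 //; apply: lt_le_trans low; lra.
Qed.

Section uniform_algebra_theory.
Variables (R : realType) (K : topologicalType) (A : set (K -> Cx R)).
Hypothesis UA : uniform_algebra A.

Lemma ua_sub a b : A a -> A b -> A (fun x => a x - b x).
Proof.
move=> Aa Ab; have -> : (fun x => a x - b x) = (fun x => a x + (-1) * b x).
  by apply/funext => x; rewrite mulN1r.
by apply: (ua_add UA Aa); exact: (ua_scale UA).
Qed.

Lemma ua_geometric_sum t N : A t -> A (fun x => \sum_(k < N) t x ^+ k).
Proof.
move=> At; have Apow n : A (fun x => t x ^+ n).
  elim: n => [|n IH]; first exact: (ua_const UA 1).
  by under eq_fun do rewrite exprS; exact: (ua_mul UA).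
elim: N => [|N IH]; first by under eq_fun do rewrite big_ord0; exact: ua_const.
by under eq_fun do rewrite big_ord_recr /=; exact: (ua_add UA).
Qed.

(* The Neumann series of [t] converges uniformly, and [A] is uniformly closed. *)
Lemma ua_onemV t (rho : R) : A t -> 0 <= rho < 1 ->
  (forall x, normc (t x) <= rho) -> A (fun x => (1 - t x)^-1).
Proof.
move=> At /andP[rho0 rho1] t_rho.
have t1 x : 1 - t x != 0 by apply: onem_neq0; exact: le_lt_trans (t_rho x) _.
apply: (ua_closed UA).
  move=> x; apply: (continuousV (s := fun y => 1 - t y)) => //.
  by apply: cvgB; [exact: cvg_cst | exact: (ua_cont UA At)].
move=> e e0.
have rho_lt1 : `|rho| < 1 by rewrite ger0_norm.
have e_rho : 0 < e * (1 - rho) by rewrite mulr_gt0 // subr_gt0.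
have [N _ /(_ N (leqnn N))] := cvgr0_norm_le _ (cvg_expr rho_lt1) _ e_rho.
rewrite ger0_norm ?exprn_ge0 // -ler_pdivrMr ?subr_gt0 // => N_rho.
exists (fun x => \sum_(k < N) t x ^+ k); first exact: ua_geometric_sum.
move=> x; rewrite normr_normc lecR; apply: le_trans N_rho.
exact: normc_geometric_tail.
Qed.

Variable phi : (K -> Cx R) -> Cx R.
Hypothesis Cphi : character A phi.

Lemma char1 : phi (fun _ => 1) = 1.
Proof.
case: Cphi => _ _ phiM [a Aa phi_a] _.
have := phiM _ _ (ua_const UA 1) Aa; under eq_fun do rewrite mul1r.
by rewrite -{1}(mul1r (phi a)) => /(mulIf (introN eqP phi_a)).
Qed.

Lemma char_sub a b : A a -> A b -> phi (fun x => a x - b x) = phi a - phi b.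
Proof.
case: Cphi => phiD phiZ _ _ _ Aa Ab.
have -> : (fun x => a x - b x) = (fun x => a x + (-1) * b x).
  by apply/funext => x; rewrite mulN1r.
by rewrite phiD ?phiZ ?mulN1r //; exact: (ua_scale UA).
Qed.

(* [1 - t] is invertible in [A], so [phi (1 - t) = 1 - phi t] cannot vanish. *)
Lemma char_neq1 t (rho : R) : A t -> 0 <= rho < 1 ->
  (forall x, normc (t x) <= rho) -> phi t != 1.
Proof.
move=> At rho01 t_rho; apply/eqP => phi_t.
have A1t : A (fun x => 1 - t x) by apply: ua_sub => //; exact: ua_const.
have phi_1t : phi (fun x => 1 - t x) = 0.
  by rewrite char_sub ?phi_t ?char1 ?subrr //; exact: ua_const.
have t1 x : 1 - t x != 0.
  by case/andP: rho01 => _ rho1; apply: onem_neq0; exact: le_lt_trans (t_rho x) _.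
case: Cphi => _ _ phiM _ _.
have := phiM _ _ A1t (ua_onemV At rho01 t_rho); rewrite phi_1t mul0r.
under eq_fun do rewrite mulfV //.
by rewrite char1; apply/eqP; exact: oner_neq0.
Qed.

Lemma char_bound a (M : R) : 0 <= M -> A a -> (forall x, normc (a x) <= M) ->
  normc (phi a) <= M.
Proof.
move=> M0 Aa a_M; rewrite leNgt; apply/negP => M_phi.
have phi_a0 : phi a != 0 by rewrite -normc_eq0 gt_eqF // (le_lt_trans M0).
have phi_a_gt0 : 0 < normc (phi a) by apply: le_lt_trans M_phi.
case: Cphi => _ phiZ _ _ _.
suff : phi (fun x => (phi a)^-1 * a x) != 1 by rewrite phiZ // mulVf // eqxx.
apply: (char_neq1 (rho := M / normc (phi a))).
- exact: (ua_scale UA).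
- by rewrite divr_ge0 ?normc_ge0 //= ltr_pdivrMr // mul1r.
- by move=> x; rewrite normcM normcV mulrC ler_wpM2r // invr_ge0 ltW.
Qed.

Lemma char_dist_le g h (r : R) : 0 <= r -> A g -> A h ->
  (forall x, normc (g x - h x) <= r) -> normc (phi g - phi h) <= r.
Proof.
by move=> r0 Ag Ah gh; rewrite -char_sub //; apply: char_bound => //; exact: ua_sub.
Qed.

End uniform_algebra_theory.

(* [compact_cover] is only available for pointed spaces. *)
Definition pointed_at (T : topologicalType) (x0 : T) : Type := T.
HB.instance Definition _ (T : topologicalType) (x0 : T) :=
  Topological.copy (pointed_at x0) T.
HB.instance Definition _ (T : topologicalType) (x0 : T) :=
  isPointed.Build (pointed_at x0) x0.

Lemma compact_finite_subcover (T : topologicalType) (f : T -> set T) :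
  compact [set: T] -> (forall z, open (f z)) -> (forall x, f x x) ->
  exists s : seq T, forall x, exists2 z, z \in s & f z x.
Proof.
move=> cT f_open f_x.
have [[x0 _]|T0] := pselect (exists x : T, True); last first.
  by exists [::] => x; case: T0; exists x.
have : compact [set: pointed_at x0] by [].
rewrite compact_cover => /(_ _ [set: T] f (fun z _ => f_open z)) [x _|s _ s_cover].
  by exists x.
exists (finmap.enum_fset s) => x.
by have [z zs fzx] := s_cover x Logic.I; exists z.
Qed.

Section compact_pseudometric.
Variables (R : realType) (K : pseudoMetricType R).
Hypothesis cK : compact [set: K].

Lemma compact_finite_net (e : R) : 0 < e ->
  exists s : seq K, forall x, exists2 z, z \in s & ball z e x.
Proof.
move=> e0; have [s s_cover] := compact_finite_subcover
  (f := fun z => interior (ball z e)) cK (fun z => open_interior _)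
  (fun x => nbhsx_ballx x e e0).
by exists s => x; have [z zs /interior_subset] := s_cover x; exists z.
Qed.

Lemma compact_nets : exists N : nat -> seq K,
  forall n x, exists2 z, z \in N n & ball z n.+1%:R^-1 x.
Proof.
have /choice[N N_net] : forall n, exists s : seq K,
    forall x, exists2 z, z \in s & ball z n.+1%:R^-1 x.
  by move=> n; apply: compact_finite_net; rewrite invr_gt0.
by exists N.
Qed.

Lemma continuous_at_ball (g : K -> Cx R) x : {for x, continuous g} ->
  forall e, 0 < e -> exists2 d, 0 < d & forall y, ball x d y -> normc (g x - g y) <= e.
Proof.
move=> gx e e0; have e0C : 0 < e%:C by rewrite ltcR.
have [d d0 gd] := (nbhs_ballP x _).1 (cvgr_dist_le _ _ gx _ e0C).
by exists d => // y /gd; rewrite normr_normc lecR.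
Qed.

Lemma compact_unif_continuous (g : K -> Cx R) : continuous g ->
  forall e, 0 < e -> exists2 d, 0 < d & forall x y, ball x d y -> normc (g x - g y) <= e.
Proof.
move=> gc e e0.
have /choice[d dP] : forall z, exists d,
    0 < d /\ forall y, ball z d y -> normc (g z - g y) <= e / 2.
  move=> z; have [d d0 gd] := continuous_at_ball (gc z) (divr_gt0 e0 (ltr0Sn _ 1)).
  by exists d.
have d2_gt0 z : 0 < d z / 2 by rewrite divr_gt0 // (dP z).1.
have [s s_cover] := compact_finite_subcover
  (f := fun z => interior (ball z (d z / 2))) cK (fun z => open_interior _)
  (fun x => nbhsx_ballx x _ (d2_gt0 x)).
exists (\big[Order.min/1]_(z <- s) (d z / 2)); first exact: lt_bigmin.
move=> x y xy; have [z zs /interior_subset zx] := s_cover x.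
have zy : ball z (d z) y.
  rewrite [d z]splitr; apply: ball_triangle zx (le_ball _ xy); exact: ge_bigmin_seq.
have zx' : ball z (d z) x by apply: le_ball zx; have := (dP z).1; lra.
apply: le_trans (le_normc_distD _ (g z) _) _; rewrite normc_distC [e]splitr.
by apply: lerD; apply: (dP z).2.
Qed.

End compact_pseudometric.

Definition ratC {R : realType} (q : rat * rat) : Cx R := ratr q.1 +i* ratr q.2.

Lemma ratC_approx (R : realType) (z : Cx R) (e : R) : 0 < e ->
  exists q, normc (z - ratC q) <= e.
Proof.
move=> e0; have e2 : 0 < e / 2 by rewrite divr_gt0.
have approx (a : R) : exists q : rat, `|a - ratr q| < e / 2.
  have /rat_in_itvoo[q] : a - e / 2 < a + e / 2 by lra.
  by rewrite in_itv /= => /andP[q1 q2]; exists q; rewrite ltr_norml; apply/andP; split; lra.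
case: z => a b; have [q1 h1] := approx a; have [q2 h2] := approx b.
exists (q1, q2); rewrite /normc /= -[e]ger0_norm ?(ltW e0) // -sqrtr_sqr.
rewrite ler_sqrt ?exprn_ge0 //; last exact: ltW.
by move: h1 h2; rewrite !ltr_norml => /andP[h1 h1'] /andP[h2 h2']; nra.
Qed.

Section separability.
Variables (R : realType) (K : pseudoMetricType R).
Hypothesis cK : compact [set: K].

(* [c (n, m, q)] is any [g] in [S] oscillating by at most [1/(m+1)] on balls of
   radius [1/(n+1)] whose values on the [n]-th net are [1/(m+1)]-close to the
   rational points listed in [q]; two such functions are [4/(m+1)]-close. *)
Lemma continuous_separable (S : set (K -> Cx R)) g0 :
  (forall g, S g -> continuous g) -> S g0 ->
  exists c : nat * nat * seq (rat * rat) -> K -> Cx R, (forall i, S (c i)) /\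
    forall g, S g -> forall e, 0 < e -> exists i, forall x, normc (g x - c i x) <= e.
Proof.
move=> S_cont Sg0; have [N N_net] := compact_nets cK.
have /choice[q_of q_ofP] : forall zm : Cx R * nat,
    exists q, normc (zm.1 - ratC q) <= zm.2.+1%:R^-1.
  by move=> [z m]; apply: ratC_approx.
pose P (i : nat * nat * seq (rat * rat)) (g : K -> Cx R) :=
  let: (n, m, q) := i in
  (forall x y, ball x n.+1%:R^-1 y -> normc (g x - g y) <= m.+1%:R^-1) /\
  (forall z, z \in N n -> normc (g z - ratC (nth 0 q (index z (N n)))) <= m.+1%:R^-1).
have /choice[c cP] : forall i, exists g, S g /\ ((exists2 h, S h & P i h) -> P i g).
  move=> i; have [[h Sh Ph]|noP] := pselect (exists2 h, S h & P i h).
    by exists h.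
  by exists g0.
exists c; split => [i|g Sg e e0]; first exact: (cP i).1.
have [m] : exists m, 0 + m.+1%:R^-1 < e / 4 by apply: ltr_add_invr; rewrite divr_gt0.
rewrite add0r => m_e; have m0 : 0 < m.+1%:R^-1 :> R by rewrite invr_gt0.
have [d d0 g_unif] := compact_unif_continuous cK (S_cont _ Sg) m0.
have [n] := ltr_add_invr d0; rewrite add0r => n_d.
pose i := (n, m, [seq q_of (g z, m) | z <- N n]).
have Pg : P i g.
  split => [x y /(le_ball (ltW n_d))|z zN]; first exact: g_unif.
  by rewrite (nth_map z) ?index_mem // nth_index //; exact: q_ofP (g z, m).
have [c_osc c_net] := (cP i).2 (ex_intro2 _ _ g Sg Pg).
exists i => x; have [z zN zx] := N_net n x.
pose r : Cx R := ratC (q_of (g z, m)).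
have g_osc : normc (g x - g z) <= m.+1%:R^-1.
  by rewrite normc_distC; exact: g_unif _ _ (le_ball (ltW n_d) zx).
have g_r : normc (g z - r) <= m.+1%:R^-1 := q_ofP (g z, m).
have r_c : normc (r - c i z) <= m.+1%:R^-1.
  by rewrite normc_distC; move: (c_net z zN); rewrite (nth_map z) ?index_mem ?nth_index.
have c_osc' := c_osc z x zx.
have := le_normc_distD (g x) (g z) (c i x).
have := le_normc_distD (g z) r (c i x).
have := le_normc_distD r (c i z) (c i x).
(* [lra] fails on the atom [m.+1%:R^-1] unless it is abstracted. *)
set mu := m.+1%:R^-1 in m_e g_osc g_r r_c c_osc' *; lra.
Qed.

End separability.

Lemma open_normc_ball (R : realType) (U : set (Cx R)) u : open U -> U u ->
  exists2 e, 0 < e & forall v, normc (u - v) < e -> U v.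
Proof.
move=> oU Uu; have /nbhs_ballP[[a b] /=] := open_nbhs_nbhs (conj oU Uu).
rewrite ltcE /= => /andP[/eqP -> a0] a_U.
by exists a => // v uv; apply: a_U; exact/ball_normc.
Qed.

Lemma C_measurable_open d (Omega : measurableType d) (R : realType) (g : Omega -> Cx R) :
  (forall U, open U -> measurable (g @^-1` U)) -> C_measurable g.
Proof.
move=> g_open; apply: (smallest_sub _ g_open); split => /=.
- by rewrite preimage_set0.
- by move=> X mX; rewrite setTD preimage_setC; exact: measurableC.
- by move=> F mF; rewrite preimage_bigcup; exact: bigcupT_measurable.
Qed.

Section random_continuous_function.
Variables (d : measure_display) (Omega : measurableType d).
Variables (R : realType) (K : pseudoMetricType R).
Hypothesis cK : compact [set: K].
Variable f : Omega -> K -> Cx R.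
Hypothesis f_cont : forall w, continuous (f w).
Hypothesis f_meas : forall z, C_measurable (fun w => f w z).

Lemma measurable_sup_dist_le (c : K -> Cx R) (r : R) : continuous c ->
  measurable [set w | forall x, normc (f w x - c x) <= r].
Proof.
move=> c_cont; have [N N_net] := compact_nets cK.
have -> : [set w | forall x, normc (f w x - c x) <= r] =
    \bigcap_k \bigcap_n \bigcap_(z in [set` N n])
      (fun w => f w z) @^-1` ball (c z) (r + k.+1%:R^-1)%:C.
  apply/seteqP; split => w /= w_r.
    move=> k _ n _ z _; rewrite /= ball_normc normc_distC.
    by apply: le_lt_trans (w_r z) _; rewrite ltrDl invr_gt0.
  move=> x; apply/ler_addgt0Pr => e e0.
  pose h y := f w y - c y.
  have h_cont : {for x, continuous h} by apply: cvgB; [exact: f_cont | exact: c_cont].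
  have e2 : 0 < e / 2 by rewrite divr_gt0.
  have [del del0 h_del] := continuous_at_ball h_cont e2.
  have [k] := ltr_add_invr e2; rewrite add0r => k_e.
  have [n] := ltr_add_invr del0; rewrite add0r => n_del.
  have [z zN zx] := N_net n x.
  have hz : normc (h z) < r + k.+1%:R^-1.
    by rewrite /h normc_distC; apply/ball_normc; exact: w_r k Logic.I n Logic.I z zN.
  have hxz : normc (h x - h z) <= e / 2.
    by apply/h_del/ball_sym; apply: le_ball (ltW n_del) _ zx.
  have := le_normcD (h x - h z) (h z); rewrite subrK.
  set mu := k.+1%:R^-1 in k_e hz *; lra.
apply: bigcapT_measurable => k; apply: bigcapT_measurable => n.
apply: fin_bigcap_measurable => [|z _]; first exact: finite_seq.
by apply: f_meas; apply: sub_gen_smallest; exact: ball_open.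
Qed.

End random_continuous_function.

Section gelfand_transform_measurable.
Variables (d : measure_display) (Omega : measurableType d).
Variables (R : realType) (K : pseudoMetricType R) (A : set (K -> Cx R)).
Hypotheses (cK : compact [set: K]) (UA : uniform_algebra A).
Variable f : Omega -> K -> Cx R.
Hypothesis f_A : forall w, A (f w).
Hypothesis f_meas : forall z, C_measurable (fun w => f w z).

(* With [c] a countable dense family of [A], [phi (f w)] lies in the open set
   [U] iff [f w] is uniformly [1/(k+1)]-close to some [c i] whose closed
   [1/(k+1)]-ball of values under [phi] is contained in [U]. *)
Lemma measurable_char_preimage phi U : character A phi -> open U ->
  measurable [set w | U (phi (f w))].
Proof.
move=> Cphi oU.
have [c [Ac c_dense]] := continuous_separable cK (ua_cont UA) (ua_const UA 0).
have f_cont w : continuous (f w) := ua_cont UA (f_A w).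
have c_cont i : continuous (c i) := ua_cont UA (Ac i).
pose B ik := [set w | forall x, normc (f w x - c ik.1 x) <= ik.2.+1%:R^-1].
pose P ik := forall u, normc (u - phi (c ik.1)) <= ik.2.+1%:R^-1 -> U u.
have phi_close w ik : B ik w -> normc (phi (f w) - phi (c ik.1)) <= ik.2.+1%:R^-1.
  by apply: (char_dist_le UA Cphi); rewrite ?invr_ge0.
have -> : [set w | U (phi (f w))] = \bigcup_(ik in P) B ik.
  apply/seteqP; split => w /=; last by case=> ik Pik /phi_close; exact: Pik.
  move=> Uw; have [e e0 e_U] := open_normc_ball oU Uw.
  have [k] : exists k, 0 + k.+1%:R^-1 < e / 2 by apply: ltr_add_invr; rewrite divr_gt0.
  rewrite add0r => k_e.
  have [i i_k] : exists i, forall x, normc (f w x - c i x) <= k.+1%:R^-1.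
    by apply: c_dense; rewrite ?invr_gt0.
  exists (i, k) => // u u_phi; apply: e_U.
  have := le_normc_distD (phi (f w)) (phi (c i)) u.
  have := phi_close w (i, k) i_k; rewrite normc_distC in u_phi.
  set mu := k.+1%:R^-1 in k_e u_phi *; lra.
rewrite bigcup_mkcond; apply: countable_bigcupT_measurable => [|ik].
  exact: countableP.
case: ifP => _; last exact: measurable0.
by apply: measurable_sup_dist_le => //; exact: c_cont.
Qed.

End gelfand_transform_measurable.

Lemma gelfand_transform_continuous (R : realType) (K : topologicalType)
    (A : set (K -> Cx R)) (Omega : Type) (f : Omega -> K -> Cx R) (w : Omega) :
  continuous (gelfand_transform A f w).
Proof.
move=> phi.
have incl_cont := @initial_continuous _ _
  (fun m : characters A => (proj1_sig m : {ptws (K -> Cx R) -> Cx R})) phi.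
exact: continuous_comp incl_cont (@proj_continuous _ _ (f w) _).
Qed.

Theorem proposition5p4 (d : measure_display) (Omega : measurableType d)
  (R : realType) (K : pseudoMetricType R) (A : set (K -> Cx R))
  (f : Omega -> K -> Cx R) :
  hausdorff_space K -> compact [set: K] ->
  uniform_algebra A ->
  (forall w, A (f w)) ->
  (forall z : K, C_measurable (fun w => f w z)) ->
  (forall phi : gelfand_space A,
      C_measurable (fun w => gelfand_transform A f w phi)) /\
  (forall w : Omega, continuous (gelfand_transform A f w)).
Proof.
move=> _ cK UA f_A f_meas; split => [phi|w]; last exact: gelfand_transform_continuous.
apply: C_measurable_open => U oU.
exact: measurable_char_preimage (proj2_sig phi) oU.
Qed.
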